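(* Let $W$ be a finite set and $\mathtt{N}=\{N_1,\ldots,N_r\}$ a sequence of subsets of $W$ with $N_1\cup\cdots\cup N_r=W$, and put $m=|W|+r$. Put $M_i=N_i-(N_1\cup\cdots\cup N_{i-1})$, $\mathtt{M}=\{M_1,\ldots,M_r\}$, and $U=\widetilde{M}_2\cup\cdots\cup\widetilde{M}_r$. If $\widetilde{N}_i\cap\widetilde{N}_j\ne\emptyset$ for all $i,j$, then the inclusion $\mathbb{R}\mathcal{Z}_{K(\mathtt{M})_U}\to\mathbb{R}\mathcal{Z}_{K(\mathtt{N})}^{m-1}$ is null homotopic.
   Context: Choose distinct points $a_1,\ldots,a_r\notin W$, $\widetilde{N}_i=N_i\sqcup\{a_i\}$, $\widetilde{M}_i=M_i\sqcup\{a_i\}$, $V=W\sqcup\{a_1,\ldots,a_r\}$ (so $|V|=m$). $K(\mathtt{N})$ (resp. $K(\mathtt{M})$) is the simplicial complex on $V$ whose minimal non-faces are exactly $\widetilde{N}_1,\ldots,\widetilde{N}_r$ (resp. $\widetilde{M}_1,\ldots,\widetilde{M}_r$); since $M_i\subset N_i$, $K(\mathtt{M})\subset K(\mathtt{N})$. $K(\mathtt{M})_U=\{\sigma\in K(\mathtt{M})\mid\sigma\subset U\}$ on vertex set $U$. For a complex $K$ on vertex set $V$, $\mathbb{R}\mathcal{Z}_K=\bigcup_{\sigma\in K}\prod_{v\in V}Y_v$ with $Y_v=CS^0$ (reduced cone, an interval) if $v\in\sigma$ and $Y_v=S^0$ otherwise; its fat wedge filtration is $\mathbb{R}\mathcal{Z}_K^i=\{(x_v)\in\mathbb{R}\mathcal{Z}_K\mid\text{at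 least }|V|-i\text{ coordinates are the basepoint}\}$. The inclusion $\mathbb{R}\mathcal{Z}_{K(\mathtt{M})_U}\to\mathbb{R}\mathcal{Z}_{K(\mathtt{N})}^{m-1}$ puts the basepoint in every coordinate outside $U$. *)

From HB Require Import structures.
From mathcomp Require Import all_boot all_order all_algebra.
From mathcomp Require Import all_classical all_reals all_analysis.
Set Implicit Arguments. Unset Strict Implicit. Unset Printing Implicit Defensive.
Import Order.TTheory GRing.Theory Num.Theory.
Import numFieldNormedType.Exports.
Local Open Scope classical_set_scope.
Local Open Scope ring_scope.

(* Vertex set V = W ⊔ {a_1,...,a_r}; a_i is [inr i]. *)
Definition Vtx (W : finType) (r : nat) : finType := (W + 'I_r)%type.

(* M_i = N_i - (N_1 ∪ ... ∪ N_{i-1})  (indices are 0-based here) *)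
Definition Mseq (W : finType) (r : nat) (N : 'I_r -> {set W}) (i : 'I_r)
  : {set W} := N i :\: \bigcup_(j < r | (j < i)%N) N j.

Definition tld (W : finType) (r : nat) (S : {set W}) (i : 'I_r) : {set Vtx W r} :=
  inr i |: [set inl w | w in S].

(* K(F): simplicial complex on V whose minimal non-faces are F~_1,...,F~_r,
   i.e. sigma is a face iff it contains none of the F~_i
   (the F~_i are pairwise incomparable since a_i lies only in F~_i). *)
Definition Kface (W : finType) (r : nat) (F : 'I_r -> {set W})
  (sigma : {set Vtx W r}) : bool := [forall i, ~~ (tld (F i) i \subset sigma)].

Definition Uset (W : finType) (r : nat) (N : 'I_r -> {set W}) : {set Vtx W r} :=
  \bigcup_(i < r | (0 < i)%N) tld (Mseq N i) i.

Definition Usub (W : finType) (r : nat) (N : 'I_r -> {set W}) : finType :=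
  {v : Vtx W r | v \in Uset N}.

Definition KMU_face (W : finType) (r : nat) (N : 'I_r -> {set W})
  (tau : {set Usub N}) : bool := Kface (Mseq N) [set val u | u in tau].

(* Real moment-angle complex RZ_K ⊂ ∏_{v∈D} Y_v ⊂ R^D (product topology), with the model
   CS^0 = [0,1], S^0 = {0,1} ⊂ CS^0, basepoint 0. *)
Definition RZ (R : realType) (D : finType) (face : {set D} -> bool)
  : set {ptws D -> R} :=
  [set x : {ptws D -> R} | exists sigma : {set D}, face sigma /\
     forall v : D, if v \in sigma then 0 <= x v <= 1 else (x v == 0) || (x v == 1)].

(* fat wedge filtration: RZ_K^i = points with at least |D| - i coordinates
   equal to the basepoint 0 *)
Definition RZfat (R : realType) (D : finType) (face : {set D} -> bool) (i : nat)
  : set {ptws D -> R} :=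
  [set x : {ptws D -> R} | RZ face x /\ (#|D| - i <= #|[set v : D | x v == 0%R]%SET|)%N].

Definition inclU (R : realType) (W : finType) (r : nat) (N : 'I_r -> {set W})
  (x : {ptws Usub N -> R}) : {ptws Vtx W r -> R} :=
  fun v => match insub v with Some u => x u | None => 0 end.

Definition null_homotopic (R : realType) (X Y : topologicalType)
  (A : set X) (B : set Y) (f : X -> Y) : Prop :=
  exists (c : Y) (H : R * X -> Y),
    [/\ B c,
        {within [set p : R * X | 0 <= p.1 <= 1 /\ A p.2], continuous H},
        forall x, A x -> H (0, x) = f x /\ H (1, x) = c
      & forall t x, 0 <= t <= 1 -> A x -> B (H (t, x))].

(* U is a face of K(N): it omits a_1, so it contains no N~_1, and for i > 1
   a common vertex of N~_1 and N~_i is a_1 or a point of N_1, which lies in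
   no M_j, so it is outside U.  Scaling a point of RZ_{K(M)_U} by t in [0, 1]
   keeps it in the cube on the face U, with the coordinate a_1 at the
   basepoint, hence in RZ^{m-1}_{K(N)}; so the straight line homotopy
   x |-> (1 - t) x contracts the inclusion. *)
From HB Require Import structures.
From mathcomp Require Import all_boot all_order all_algebra.
From mathcomp Require Import all_classical all_reals all_analysis.
Set Implicit Arguments. Unset Strict Implicit. Unset Printing Implicit Defensive.
Import Order.TTheory GRing.Theory Num.Theory.
Import numFieldNormedType.Exports.
Local Open Scope classical_set_scope.
Local Open Scope ring_scope.

Lemma continuous_ptws (R : realType) (X : topologicalType) (D : Type)
  (f : X -> {ptws D -> R}) :
  (forall v, continuous (fun x => f x v)) -> continuous f.
Proof.
move=> fc x; apply/cvg_sup => v U [_ [[V oV <-]] /= Vfx] /filterS; apply.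
exact/fc/open_nbhs_nbhs.
Qed.

Lemma continuous_scale_homotopy (R : realType) (X : topologicalType)
  (D : eqType) (f : X -> {ptws D -> R}) :
  continuous f ->
  continuous (fun p : R * X => (fun v => (1 - p.1) * f p.2 v) : {ptws D -> R}).
Proof.
move=> fc; apply: continuous_ptws => v p.
have c1 : (fun q : R * X => 1 - q.1) @ p --> 1 - p.1.
  by apply: cvgB; [exact: cvg_cst | exact: cvg_fst].
have c2 : (fun q : R * X => f q.2) @ p --> f p.2.
  have snd_p : (fun q : R * X => q.2) @ p --> p.2 by exact: cvg_snd.
  exact: cvg_comp snd_p (fc p.2).
have c3 : (fun q : R * X => f q.2 v) @ p --> f p.2 v.
  exact: cvg_comp c2 (@proj_continuous D (fun=> R) v (f p.2)).
exact: cvgM c1 c3.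
Qed.

Lemma null_homotopic_star (R : realType) (X : topologicalType) (D : eqType)
  (A : set X) (B : set {ptws D -> R}) (f : X -> {ptws D -> R}) :
  continuous f -> (exists x, A x) ->
  (forall t x, 0 <= t <= 1 -> A x -> B (fun v => t * f x v)) ->
  null_homotopic R A B f.
Proof.
move=> fc [x0 Ax0] Bstar.
exists (fun _ => 0), (fun p v => (1 - p.1) * f p.2 v); split.
- have -> : (fun _ : D => 0 : R) = fun v => 0 * f x0 v.
    by apply/funext => v; rewrite mul0r.
  by apply: Bstar Ax0; rewrite lexx ler01.
- exact/continuous_subspaceT/continuous_scale_homotopy.
- by move=> x _; split; apply/funext => v /=; rewrite ?subr0 ?mul1r ?subrr ?mul0r.
- move=> t x /andP [t0 t1] Ax /=; apply: Bstar Ax.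
  by rewrite subr_ge0 t1 gerBl t0.
Qed.

Section RealMomentAngle.
Variables (R : realType) (D : finType) (face : {set D} -> bool).

Lemma RZ_unit_interval (x : {ptws D -> R}) v : RZ face x -> 0 <= x v <= 1.
Proof.
case=> sigma [_ /(_ v)]; case: ifP => // _.
by case/orP => /eqP ->; rewrite lexx ler01.
Qed.

Lemma RZ_cube_face (sigma : {set D}) (y : {ptws D -> R}) :
  face sigma -> (forall v, 0 <= y v <= 1) ->
  (forall v, v \notin sigma -> y v = 0) -> RZ face y.
Proof.
move=> fsigma y01 y0; exists sigma; split=> // v.
by case: ifPn => // /y0 ->; rewrite eqxx.
Qed.

Lemma RZfat_pred (y : {ptws D -> R}) :
  RZ face y -> ((0 < #|D|)%N -> exists v, y v = 0) -> RZfat face #|D|.-1 y.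
Proof.
move=> RZy y0; split=> //; case: (posnP #|D|) => [-> // | /y0 [v yv0]].
have : (0 < #|[set v | y v == 0%R]%SET|)%N by apply/card_gt0P; exists v; rewrite inE yv0.
by case: #|D| => [|n] /=; rewrite ?subSnn.
Qed.

End RealMomentAngle.

Section Complexes.
Variables (W : finType) (r : nat).

Lemma mem_tld_inl (S : {set W}) (i : 'I_r) w :
  (inl w \in tld S i) = (w \in S).
Proof.
rewrite /tld in_setU1 /=.
by apply/idP/idP => [/imsetP [w' ws [->]] | ws] //; exact: imset_f.
Qed.

Lemma mem_tld_inr (S : {set W}) (i k : 'I_r) :
  (inr k \in tld S i) = (k == i).
Proof.
rewrite /tld in_setU1; case: imsetP => [[w _] // | _].
by rewrite orbF.
Qed.

Lemma Kface_set0 (F : 'I_r -> {set W}) : Kface F finset.set0.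
Proof.
apply/forallP => i; apply/negP => /fintype.subsetP /(_ (inr i)).
by rewrite mem_tld_inr eqxx finset.in_set0 => /(_ isT).
Qed.

Variable N : 'I_r -> {set W}.

Lemma inr0_notin_Uset (i : 'I_r) : val i = 0%N -> inr i \notin Uset N.
Proof.
move=> i0; apply/finset.bigcupP => -[k k_gt0].
by rewrite mem_tld_inr => /eqP ik; rewrite -ik i0 in k_gt0.
Qed.

Lemma Uset_proper : (0 < #|Vtx W r|)%N -> exists v, v \notin Uset N.
Proof.
case: (posnP r) => [r0 | r_gt0] /card_gt0P [v _].
  by exists v; apply/finset.bigcupP => -[k]; have := ltn_ord k; rewrite {2}r0.
by exists (inr (Ordinal r_gt0)); exact: inr0_notin_Uset.
Qed.

Lemma Kface_Uset :
  (forall i j : 'I_r, tld (N i) i :&: tld (N j) j != finset.set0) -> Kface N (Uset N).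
Proof.
move=> Nint; apply/forallP => i; apply/negP => /fintype.subsetP sub.
have [i0 | i_gt0] := posnP i.
  by have /negP := @inr0_notin_Uset i i0; apply; apply: sub; rewrite mem_tld_inr.
pose i1 := Ordinal (ltn_trans i_gt0 (ltn_ord i)).
have /finset.set0Pn [[w | k]] := Nint i1 i; rewrite inE => /andP [z1 zi].
  have /finset.bigcupP [k k_gt0] : inl w \in Uset N by apply: sub.
  rewrite mem_tld_inl inE => /andP [/finset.bigcupP []].
  by exists i1; last by rewrite -(mem_tld_inl _ i1).
move: z1 zi; rewrite !mem_tld_inr => /eqP -> /eqP /(congr1 val) /= i0.
by have := i_gt0; rewrite -i0.
Qed.

Lemma continuous_inclU (R : realType) : continuous (@inclU R W r N).
Proof.
apply: continuous_ptws => v; rewrite /inclU; case: insub => [u|].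
  exact: proj_continuous.
exact: cst_continuous.
Qed.

Lemma inclU_notin (R : realType) (x : {ptws Usub N -> R}) v :
  v \notin Uset N -> inclU x v = 0.
Proof. by move=> vU; rewrite /inclU insubF //; exact: negbTE. Qed.

End Complexes.

Theorem proposition4p5 (R : realType) (W : finType) (r : nat)
  (N : 'I_r -> {set W})
  (Hcover : (\bigcup_(i < r) N i)%SET = [set: W]%SET)
  (Hint : forall i j : 'I_r, tld (N i) i :&: tld (N j) j != finset.set0) :
  @null_homotopic R {ptws Usub N -> R} {ptws Vtx W r -> R} (@RZ R (Usub N) (@KMU_face W r N))
                   (RZfat (@Kface W r N) (#|W| + r).-1)
                   (@inclU R W r N).
Proof.
apply: null_homotopic_star; first exact: continuous_inclU.
  exists (fun=> 0); apply: (@RZ_cube_face _ _ _ finset.set0) => //.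
  - by rewrite /KMU_face imset0; exact: Kface_set0.
  - by move=> v; rewrite lexx ler01.
move=> t x /andP [t0 t1] RZx.
have cardV : #|Vtx W r| = (#|W| + r)%N by rewrite card_sum card_ord.
rewrite -cardV.
apply: RZfat_pred.
  apply: (RZ_cube_face (Kface_Uset Hint)) => [v | v vU]; last first.
    by rewrite inclU_notin ?mulr0.
  rewrite /inclU; case: insub => [u|]; last by rewrite mulr0 lexx ler01.
  have /andP [x0 x1] := RZ_unit_interval u RZx.
  by rewrite mulr_ge0 //= mulr_ile1.
by case/(Uset_proper N) => v vU; exists v; rewrite inclU_notin ?mulr0.
Qed.
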